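(* Let $n\ge 1$ and consider the discrete-time system $$x(k+1)=A_0x(k)+B_0u(k)+E_0f(k),\qquad y(k)=C_0x(k),$$ with $A_0\in\mathbb{R}^{n\times n}$, $B_0,E_0\in\mathbb{R}^{n\times1}$, $C_0\in\mathbb{R}^{1\times n}$, known scalar input $u$, unknown scalar disturbance $f$ and scalar output $y$. Let $X(k)=[x(k)^T,f(k)]^T$, $A=\begin{bmatrix}A_0&E_0\\0_{1\times n}&1\end{bmatrix}$, $B=\begin{bmatrix}B_0\\0\end{bmatrix}$, $C=[C_0,\ 0]$, and for a gain $L\in\mathbb{R}^{n+1}$ consider the observer $$\hat X(k+1)=A\hat X(k)+Bu(k)+L\big(y(k)-C\hat X(k)\big),$$ where $\hat X(k)=[\hat x(k)^T,\hat f(k)]^T$. Then the property $$\hat f(k)=f(k-n-1)\quad\text{for all }k>n+1$$ (for all input sequences $u$, disturbance sequences $f$, and initial conditions $x(0)$, $\hat X(0)$) holds if and only if (a) $(A_0,C_0)$ is observable and $(A_0,E_0,C_0)$ has no invariant zeros, i.e. $\operatorname{rank}\begin{bmatrix} A_0-zI_n & E_0\\ C_0 & 0\end{bmatrix}=n+1$ for all $z\in\mathbb{C}$, and (b) all eigenvalues of $A-LC$ are equal to $0$.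
   Context: The observer is called the general model-based extended state observer (GMB-ESO); the last component $\hat f$ of $\hat X$ is the estimate of the total disturbance $f$. The eigenvalues of $A-LC$ are called the observer eigenvalues. *)

From HB Require Import structures.
From mathcomp Require Import all_boot all_order all_algebra.
From mathcomp Require Import reals.
From mathcomp.real_closed Require Import complex.
Set Implicit Arguments. Unset Strict Implicit. Unset Printing Implicit Defensive.
Import Order.TTheory GRing.Theory Num.Theory.
Local Open Scope ring_scope.

Section GMBESO.
Variables (R : realType) (n : nat).

Definition cmx m p (M : 'M[R]_(m, p)) : 'M[complex R]_(m, p) :=
  map_mx (fun a => (a%:C)%C) M.

Definition obsv_mx (A0 : 'M[R]_n) (C0 : 'rV[R]_n) : 'M[R]_n :=
  \matrix_(i < n) (C0 *m A0 ^+ i).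
Definition observable (A0 : 'M[R]_n) (C0 : 'rV[R]_n) : Prop :=
  \rank (obsv_mx A0 C0) = n.

Definition rosenbrock (A0 : 'M[R]_n) (E0 : 'cV[R]_n) (C0 : 'rV[R]_n)
  (z : complex R) : 'M[complex R]_(n + 1) :=
  block_mx (cmx A0 - z%:M) (cmx E0) (cmx C0) (0 : 'M_1).
Definition no_invariant_zeros A0 E0 C0 : Prop :=
  forall z : complex R, \rank (rosenbrock A0 E0 C0 z) = (n + 1)%N.

Definition augA (A0 : 'M[R]_n) (E0 : 'cV[R]_n) : 'M[R]_(n + 1) :=
  block_mx A0 E0 0 (1 : 'M_1).
Definition augB (B0 : 'cV[R]_n) : 'cV[R]_(n + 1) := col_mx B0 0.
Definition augC (C0 : 'rV[R]_n) : 'rV[R]_(n + 1) := row_mx C0 0.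

Fixpoint xtraj (A0 : 'M[R]_n) (B0 E0 : 'cV[R]_n) (u f : nat -> R)
    (x0 : 'cV[R]_n) (k : nat) : 'cV[R]_n :=
  match k with
  | 0 => x0
  | k'.+1 => A0 *m xtraj A0 B0 E0 u f x0 k' + u k' *: B0 + f k' *: E0
  end.

Fixpoint obs_traj (A0 : 'M[R]_n) (B0 E0 : 'cV[R]_n) (C0 : 'rV[R]_n)
    (L : 'cV[R]_(n + 1)) (u f : nat -> R) (x0 : 'cV[R]_n)
    (Xh0 : 'cV[R]_(n + 1)) (k : nat) : 'cV[R]_(n + 1) :=
  match k with
  | 0 => Xh0
  | k'.+1 =>
      let Xh := obs_traj A0 B0 E0 C0 L u f x0 Xh0 k' in
      augA A0 E0 *m Xh + u k' *: augB B0
      + L *m (C0 *m xtraj A0 B0 E0 u f x0 k' - augC C0 *m Xh)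
  end.

Definition fhat A0 B0 E0 C0 L u f x0 Xh0 (k : nat) : R :=
  obs_traj A0 B0 E0 C0 L u f x0 Xh0 k (rshift n (ord0 : 'I_1)) 0.

End GMBESO.

From HB Require Import structures.
From mathcomp Require Import all_boot all_order all_algebra.
From mathcomp Require Import reals.
From mathcomp.real_closed Require Import complex.
From mathcomp Require Import zify ring.
Import Order.TTheory GRing.Theory Num.Theory.
Local Open Scope ring_scope.
Set Implicit Arguments. Unset Strict Implicit. Unset Printing Implicit Defensive.

(* The estimation error e = X - Xhat obeys e(k+1) = N e(k) + (f(k+1) - f(k)) [0; 1]
   with N = A - L C, so fhat(k) is f(k) minus the last entries of N^k e(0) and of
   the disturbance increments filtered through the step response s(m), the last
   entry of N^m [0; 1].  Exact delayed estimation therefore means: the last row of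
   N^k vanishes for k > n + 1, and s(m) = 1 for m <= n, s(n + 1) = 0.
   Writing N = [A0 - L1 C0, E0; -l C0, 1], the step response has this shape exactly
   when C0 A0^j E0 = 0 for j < n - 1 and l C0 A0^(n-1) E0 = 1, i.e. when
   (A0, E0, C0) has relative degree n.  Relative degree n forces observability and
   the absence of invariant zeros, while a smaller relative degree leaves nontrivial
   zero dynamics, whose eigenvalues are invariant zeros.  Finally, an eigenvector of
   N for a nonzero eigenvalue has zero last entry and is then unobservable, and
   conversely nilpotency of N kills N^k for k > n. *)

Section MatrixFacts.
Variable F : fieldType.

Lemma affine_recurrence m (N : 'M[F]_m) (x d : nat -> 'cV_m) :
    (forall k, x k.+1 = N *m x k + d k) ->
  forall k, x k = N ^+ k *m x 0 + \sum_(j < k) N ^+ (k - j.+1) *m d j.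
Proof.
move=> xS; elim=> [|k IHk]; first by rewrite expr0 mul1mx big_ord0 addr0.
rewrite xS IHk mulmxDr mulmx_sumr big_ord_recr /= subnn expr0 mul1mx addrA.
rewrite exprS -mulmxE -mulmxA; congr (_ + _ + _); apply: eq_bigr => j _.
by rewrite subSn // exprS -mulmxE mulmxA.
Qed.

Lemma nonunitmx_colker k (A : 'M[F]_k) :
  A \notin unitmx -> exists2 v : 'cV_k, v != 0 & A *m v = 0.
Proof.
rewrite -unitmx_tr -row_free_unit -kermx_eq0 => /rowV0Pn [y].
rewrite sub_kermx => /eqP yA y_neq0; exists y^T; first by rewrite trmx_eq0.
by rewrite -[A]trmxK -trmx_mul yA trmx0.
Qed.

Lemma eigenvalue_col k (g : 'M[F]_k) a :
  eigenvalue g a -> exists2 v : 'cV_k, v != 0 & g *m v = a *: v.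
Proof.
rewrite /eigenvalue /eigenspace kermx_eq0 row_free_unit => /nonunitmx_colker [v v_neq0].
by move/eqP; rewrite mulmxBl mul_scalar_mx subr_eq0 => /eqP; exists v.
Qed.

Lemma mulmx_exp_eigen k (g : 'M[F]_k) a (v : 'cV_k) i :
  g *m v = a *: v -> g ^+ i *m v = a ^+ i *: v.
Proof.
move=> gv; elim: i => [|i IHi]; first by rewrite expr0 mul1mx scale1r.
by rewrite exprS -mulmxE -mulmxA IHi -scalemxAr gv scalerA -exprSr.
Qed.

End MatrixFacts.

Section RelativeDegree.
Variables (F : fieldType) (n : nat).
Implicit Types (A : 'M[F]_n) (E : 'cV[F]_n) (C : 'rV[F]_n).

Definition has_relative_degree A E C (r : nat) : Prop :=
  (forall j, (j.+1 < r)%N -> C *m A ^+ j *m E = 0) /\ C *m A ^+ r.-1 *m E != 0.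

Definition step_state A E (m : nat) : 'cV[F]_n := \sum_(j < m) A ^+ j *m E.

Lemma step_stateS A E m : step_state A E m.+1 = step_state A E m + A ^+ m *m E.
Proof. by rewrite /step_state big_ord_recr. Qed.

Lemma step_stateSl A E m : step_state A E m.+1 = A *m step_state A E m + E.
Proof.
rewrite /step_state big_ord_recl expr0 mul1mx addrC mulmx_sumr; congr (_ + _).
by apply: eq_bigr => j _; rewrite mulmxA mulmxE -exprS.
Qed.

Lemma step_state_eq0 A E C r :
    (forall j, (j.+1 < r)%N -> C *m A ^+ j *m E = 0) ->
  forall m, (m < r)%N -> C *m step_state A E m = 0.
Proof.
move=> CAE0 m lt_mr; rewrite mulmx_sumr big1 // => j _.
by rewrite mulmxA CAE0 //; apply: leq_ltn_trans lt_mr.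
Qed.

Lemma has_relative_degree_step A E C r :
    (forall m, (m < r)%N -> C *m step_state A E m = 0) ->
  C *m step_state A E r != 0 -> has_relative_degree A E C r.
Proof.
move=> CS0 CSr; have CAE j : C *m A ^+ j *m E =
    C *m step_state A E j.+1 - C *m step_state A E j.
  by rewrite step_stateS mulmxDr mulmxA addrC addKr.
split=> [j lt_jr|]; first by rewrite CAE !CS0 ?subrr //; lia.
case: r CS0 CSr => [|r] CS0 CSr.
  by rewrite /step_state big_ord0 mulmx0 eqxx in CSr.
by rewrite /= CAE (CS0 r) // subr0.
Qed.

Lemma mulmx_exp_output_injection A (K : 'cV[F]_n) C (w : 'cV[F]_n) j :
    (forall i, (i < j)%N -> C *m A ^+ i *m w = 0) ->
  (A - K *m C) ^+ j *m w = A ^+ j *m w.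
Proof.
elim: j => [|j IHj] CAw0; first by rewrite !expr0.
rewrite !exprS -!mulmxE -!mulmxA IHj => [|i lt_ij]; last by rewrite CAw0 //; lia.
by rewrite mulmxBl -mulmxA (mulmxA C) CAw0 // mulmx0 subr0.
Qed.

Lemma has_relative_degree_output_injection A E C (K : 'cV[F]_n) r :
  has_relative_degree A E C r -> has_relative_degree (A - K *m C) E C r.
Proof.
move=> [CAE0 CAEr]; have inj j : (j < r)%N ->
    C *m (A - K *m C) ^+ j *m E = C *m A ^+ j *m E.
  move=> lt_jr; rewrite -!mulmxA mulmx_exp_output_injection // => i lt_ij.
  by rewrite CAE0 //; apply: leq_ltn_trans lt_jr.
split=> [j lt_jr|]; first by rewrite inj ?CAE0 //; lia.
have [r0|r_gt0] := posnP r; first by rewrite r0 !expr0 in CAEr *.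
by rewrite inj // ltn_predL.
Qed.

Lemma relative_degree_obsv_free A E C :
  has_relative_degree A E C n -> row_free (\matrix_(i < n) (C *m A ^+ i)).
Proof.
move=> [CAE0 CAEn]; rewrite -kermx_eq0; apply/rowV0P => x.
rewrite sub_kermx => /eqP xO.
have xOE t : \sum_(i < n) x 0 i *: (C *m A ^+ (i + t) *m E) = 0.
  rewrite -[RHS](mul0mx _ (A ^+ t *m E)) -xO (mulmx_sum_row x) mulmx_suml.
  apply: eq_bigr => i _.
  by rewrite rowK -scalemxAl exprD !mulmxA.
(* [xOE] is triangular in the Markov parameters; solve it from the last entry down. *)
have x0 t : forall i : 'I_n, (i + t)%N = n.-1 -> x 0 i = 0.
  elim/ltn_ind: t => t IHt i def_n1.
  have := xOE t; rewrite (bigD1 i) //= big1 ?addr0 => [|j /eqP ne_ji].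
    by rewrite def_n1 => /eqP; rewrite scaler_eq0 (negbTE CAEn) orbF => /eqP.
  have [lt_jt|ge_jt] := ltnP (j + t) n.-1; first by rewrite CAE0 ?scaler0 //; lia.
  have ne_ji' : (j : nat) <> i by move=> eq_ji; apply: ne_ji; apply: val_inj.
  by rewrite (IHt (n.-1 - j)%N) ?scale0r //; have := ltn_ord j; lia.
by apply/rowP => i; rewrite mxE (x0 (n.-1 - i)%N) //; have := ltn_ord i; lia.
Qed.

Lemma obsv_kernel_eq0 A C (v : 'cV[F]_n) :
    row_free (\matrix_(i < n) (C *m A ^+ i)) ->
  (forall i : 'I_n, C *m A ^+ i *m v = 0) -> v = 0.
Proof.
rewrite row_free_unit => O_unit CAv0.
have Ov : \matrix_(i < n) (C *m A ^+ i) *m v = 0.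
  by apply/row_matrixP => i; rewrite row_mul rowK CAv0 row0.
by rewrite -(mulKmx O_unit v) Ov mulmx0.
Qed.

Lemma relative_degree_rosenbrock_unit A E C z :
  has_relative_degree A E C n -> block_mx (A - z%:M) E C (0 : 'M_1) \in unitmx.
Proof.
move=> reldeg; have [CAE0 CAEn] := reldeg; apply: contraT => /nonunitmx_colker [v].
rewrite -[v]vsubmxK mul_block_col mul0mx addr0 col_mx_eq0.
move: (usubmx v) (dsubmx v) => x s nz_xs /eqP; rewrite col_mx_eq0.
case/andP=> /eqP zeroA /eqP Cx.
have Ax : A *m x = z *: x - E *m s.
  apply/eqP; rewrite -subr_eq0 -zeroA mulmxBl mul_scalar_mx.
  by rewrite opprB addrA addrAC.
have CAx i : (i < n)%N -> C *m A ^+ i *m x = 0.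
  elim: i => [|i IHi] lt_in; first by rewrite expr0 mulmx1.
  rewrite exprSr -mulmxE mulmxA -mulmxA Ax mulmxBr -scalemxAr IHi 1?ltnW //.
  by rewrite scaler0 mulmxA CAE0 // mul0mx subrr.
have x0 : x = 0.
  apply: obsv_kernel_eq0 (relative_degree_obsv_free reldeg) _ => i.
  exact: CAx (ltn_ord i).
have s0 : s = 0.
  move: zeroA; rewrite x0 mulmx0 add0r [s]mx11_scalar mul_mx_scalar => /eqP.
  rewrite scaler_eq0 => /orP [/eqP s00|/eqP E0]; first by rewrite s00 raddf0.
  by move: CAEn; rewrite E0 mulmx0 eqxx.
by move: nz_xs; rewrite x0 s0 !eqxx.
Qed.

End RelativeDegree.

Section ZeroDynamics.
Variables (F : fieldType) (n : nat).
Implicit Types (A : 'M[F]_n) (E : 'cV[F]_n) (C : 'rV[F]_n).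

Definition krylovmx A E m : 'M[F]_(n, m) := \matrix_(i < n, j < m) (A ^+ j *m E) i 0.

Lemma mulmx_krylovmx_eq0 k A E m (W : 'M[F]_(k, n)) :
  W *m krylovmx A E m = 0 <-> forall j, (j < m)%N -> W *m A ^+ j *m E = 0.
Proof.
have WK i (j : 'I_m) : (W *m krylovmx A E m) i j = (W *m A ^+ j *m E) i 0.
  by rewrite -mulmxA !mxE; apply: eq_bigr => l _; rewrite mxE.
split=> [WK0 j lt_jm | WAE0]; apply/matrixP => i l.
  by rewrite ord1 -[j]/(val (Ordinal lt_jm)) -WK WK0 !mxE.
by rewrite WK WAE0 ?mxE.
Qed.

Lemma krylov_kernel_stable A E C p (h : F) : h != 0 ->
    (forall j, (j < p)%N -> C *m A ^+ j *m E = 0) -> C *m A ^+ p *m E = h%:M ->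
  stablemx (kermx (krylovmx A E p.+1)) (A - h^-1 *: (A ^+ p.+1 *m E *m C)).
Proof.
move=> h_neq0 CAE0 CAEp.
have VAE0 := (mulmx_krylovmx_eq0 _ _ _ _).1 (mulmx_ker (krylovmx A E p.+1)).
rewrite sub_kermx; apply/eqP/mulmx_krylovmx_eq0 => j lt_jp1.
have FAE : (A - h^-1 *: (A ^+ p.+1 *m E *m C)) *m (A ^+ j *m E) =
    A ^+ j.+1 *m E - h^-1 *: (A ^+ p.+1 *m E *m (C *m A ^+ j *m E)).
  by rewrite (exprS A j) -mulmxE mulmxBl -scalemxAl !mulmxA.
move: VAE0; set V := kermx _; clearbody V => VAE0.
rewrite -2!mulmxA FAE; have [lt_jp|ge_jp] := ltnP j p.
  by rewrite CAE0 // mulmx0 scaler0 subr0 mulmxA VAE0.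
have -> : j = p by lia.
by rewrite CAEp mul_mx_scalar scalerA mulVf // scale1r subrr mulmx0.
Qed.

Lemma rosenbrock_left_kernel A E C (b : 'cV[F]_n) (y : 'rV[F]_n) a :
    y *m E = 0 -> y *m (A - b *m C) = a *: y ->
  row_mx y (- (y *m b)) *m block_mx (A - a%:M) E C (0 : 'M_1) = 0.
Proof.
move=> yE yAbC; rewrite mul_row_block yE mulmx0 addr0 mulNmx -mulmxA.
rewrite mulmxBr mul_mx_scalar -yAbC mulmxBr opprB addrCA subrr addr0 subrr.
by rewrite row_mx0.
Qed.

End ZeroDynamics.

Section ClosedField.
Variable K : numClosedFieldType.

Lemma eigenvalues0_nilpotent k (B : 'M[K]_k) :
  (forall z, eigenvalue B z -> z = 0) -> B ^+ k = 0.
Proof.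
case: k B => [|k] B eigB0; first by apply/matrixP => [[]].
have [r charB] := closed_field_poly_normal (char_poly B).
rewrite (monicP (char_poly_monic B)) scale1r in charB.
have charBX : char_poly B = 'X ^+ size r.
  rewrite charB big_seq (eq_bigr (fun=> 'X)) => [|z]; last first.
    rewrite -root_prod_XsubC -charB -eigenvalue_root_char => /eigB0 ->.
    by rewrite subr0.
  by rewrite -big_seq big_const_seq count_predT iter_mulr_1.
have size_r : size r = k.+1.
  by have := size_char_poly B; rewrite charBX size_polyXn => -[].
by have := Cayley_Hamilton B; rewrite charBX rmorphXn /= horner_mx_X size_r.
Qed.

Lemma stablemx_eigenvector n (V : 'M[K]_n) f : stablemx V f -> (0 < \rank V)%N ->
  exists a (y : 'rV_n), [/\ (y <= V)%MS, y != 0 & y *m f = a *: y].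
Proof.
move=> Vf rankV.
have [a /eigenvalueP [x xf x_neq0]] := eigenvalue_closed (restrictmx V f) rankV.
have : (x <= eigenspace (restrictmx V f) a)%MS by apply/eigenspaceP.
rewrite sub_eigenspace_conjmx ?row_base_free ?stablemx_row_base // => /eigenspaceP yf.
exists a, (x *m row_base V); split=> //.
  by rewrite (submx_trans (submxMl _ _)) // eq_row_base.
by rewrite mulmx_free_eq0 ?row_base_free.
Qed.

Lemma rosenbrock_unit_markov_eq0 n (A : 'M[K]_n) E C :
    (forall z, block_mx (A - z%:M) E C (0 : 'M_1) \in unitmx) ->
  forall j, (j.+2 <= n)%N -> C *m A ^+ j *m E = 0.
Proof.
(* For the first nonzero Markov parameter C A^p E with p < n - 1, the left kernel of
   [E, AE, ..., A^p E] is nonzero and invariant under A - (C A^p E)^-1 A^(p+1) E C;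
   a left eigenvector there extends to a left null vector of the Rosenbrock matrix. *)
move=> R_unit j lt_jn; apply/eqP; apply: contraT => CAEj.
pose P i := (i.+2 <= n)%N && (C *m A ^+ i *m E != 0).
have exP : exists i, P i by exists j; rewrite /P lt_jn.
case: (ex_minnP exP) => p /andP [lt_pn CAEp] min_p.
have CAE0 i : (i < p)%N -> C *m A ^+ i *m E = 0.
  move=> lt_ip; apply/eqP; apply: contraT => CAEi.
  by have := min_p i; rewrite /P CAEi andbT; lia.
pose h := (C *m A ^+ p *m E) 0 0.
have CAEh : C *m A ^+ p *m E = h%:M := mx11_scalar _.
have h_neq0 : h != 0 by apply: contra CAEp => /eqP h0; rewrite CAEh h0 raddf0.
have rankV : (0 < \rank (kermx (krylovmx A E p.+1)))%N.
  by rewrite mxrank_ker; have := rank_leq_col (krylovmx A E p.+1); lia.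
have [a [y [yV y_neq0 yF]]] :=
  stablemx_eigenvector (krylov_kernel_stable h_neq0 CAE0 CAEh) rankV.
rewrite scalemxAl in yF.
have yE : y *m E = 0.
  have /mulmx_krylovmx_eq0 yK : y *m krylovmx A E p.+1 = 0 by apply/sub_kermxP.
  by have := yK 0%N (ltn0Sn p); rewrite expr0 mulmx1.
have := rosenbrock_left_kernel yE yF.
move/(congr1 (mulmx^~ (invmx (block_mx (A - a%:M) E C 0)))).
rewrite /= mulmxK ?R_unit // mul0mx => /eqP; rewrite row_mx_eq0 => /andP [/eqP y0 _].
by rewrite y0 eqxx in y_neq0.
Qed.

End ClosedField.

Lemma has_relative_degree_map (F K : fieldType) (f : {rmorphism F -> K}) n
    (A : 'M[F]_n) (E : 'cV[F]_n) (C : 'rV[F]_n) r :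
  has_relative_degree A E C r ->
  has_relative_degree (map_mx f A) (map_mx f E) (map_mx f C) r.
Proof.
have mapCAE j :
    map_mx f C *m map_mx f A ^+ j *m map_mx f E = map_mx f (C *m A ^+ j *m E).
  by rewrite !map_mxM rmorphXn.
case=> CAE0 CAEr; split=> [j /CAE0 CAEj|]; rewrite mapCAE ?map_mx_eq0 //.
by rewrite CAEj map_mx0.
Qed.

Section ErrorMatrix.
Variables (F : fieldType) (n : nat).

Definition last_coord (v : 'cV[F]_(n + 1)) : F := v (rshift n ord0) 0.
Definition unit_last : 'cV[F]_(n + 1) := col_mx 0 1%:M.

Lemma last_coord_col (w : 'cV[F]_n) (a : 'M[F]_1) : last_coord (col_mx w a) = a 0 0.
Proof. by rewrite /last_coord col_mxEd. Qed.

Variables (M : 'M[F]_n) (E : 'cV[F]_n) (C : 'rV[F]_n) (l : F).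
Local Notation N := (block_mx M E (- (l *: C)) 1%:M).

Lemma mul_err_col (w : 'cV[F]_n) (s : F) :
  N *m col_mx w s%:M = col_mx (M *m w + s *: E) (s - l * (C *m w) 0 0)%:M.
Proof.
rewrite mul_block_col mul_mx_scalar mul1mx mulNmx -scalemxAl; congr col_mx.
by rewrite {1}[C *m w]mx11_scalar scale_scalar_mx -raddfN -raddfD addrC.
Qed.

Lemma pow_unit_last m :
    (forall i, (i < m)%N -> l * (C *m step_state M E i) 0 0 = 0) ->
  N ^+ m *m unit_last = col_mx (step_state M E m) 1%:M.
Proof.
elim: m => [|m IHm] lS0; first by rewrite expr0 mul1mx /step_state big_ord0.
rewrite exprS -mulmxE -mulmxA IHm => [|i lt_im]; last by rewrite lS0 //; lia.
by rewrite mul_err_col lS0 // subr0 scale1r step_stateSl.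
Qed.

Lemma last_pow_unit_last m :
    (forall i, (i < m)%N -> l * (C *m step_state M E i) 0 0 = 0) ->
  last_coord (N ^+ m.+1 *m unit_last) = 1 - l * (C *m step_state M E m) 0 0.
Proof.
move=> lS0; rewrite exprS -mulmxE -mulmxA pow_unit_last // mul_err_col.
by rewrite last_coord_col mxE eqxx mulr1n.
Qed.

Lemma err_mx_eigenvalue_eq0 k z (v : 'cV[F]_(n + 1)) :
    row_free (\matrix_(i < n) (C *m M ^+ i)) -> l != 0 ->
    (forall j, (N ^+ k) (rshift n ord0) j = 0) ->
  v != 0 -> N *m v = z *: v -> z = 0.
Proof.
move=> obs l_neq0 Nk0 v_neq0 Nv; apply/eqP; apply: contraT => z_neq0.
have v_last : last_coord v = 0.
  have := congr1 last_coord (mulmx_exp_eigen k Nv); rewrite /last_coord mxE big1 => [|j _].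
    rewrite mxE => /esym /eqP.
    by rewrite mulf_eq0 expf_eq0 (negbTE z_neq0) andbF => /eqP.
  by rewrite Nk0 mul0r.
have def_v : v = col_mx (usubmx v) 0%:M.
  rewrite -[LHS]vsubmxK; congr col_mx; apply/matrixP => i j.
  by rewrite !ord1 !mxE -v_last.
move: (usubmx v) def_v => x def_v; rewrite def_v in v_neq0 Nv.
rewrite mul_err_col scale0r addr0 sub0r scale_col_mx scale_scalar_mx mulr0 in Nv.
case/eq_col_mx: Nv => Mx /matrixP /(_ 0 0); rewrite !mxE eqxx mulr1n.
move/eqP; rewrite oppr_eq0 mulf_eq0 (negbTE l_neq0) /= => /eqP Cx0.
have Cx : C *m x = 0 by apply/matrixP => i j; rewrite !ord1 !mxE Cx0.
have x0 : x = 0.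
  apply: (obsv_kernel_eq0 obs) => i.
  by rewrite -mulmxA (mulmx_exp_eigen i Mx) -scalemxAr Cx scaler0.
by rewrite x0 raddf0 col_mx0 eqxx in v_neq0.
Qed.

End ErrorMatrix.

Arguments unit_last {F n}.

Section ObserverError.
Variables (R : realType) (n : nat).
Variables (A0 : 'M[R]_n) (B0 E0 : 'cV[R]_n) (C0 : 'rV[R]_n) (L : 'cV[R]_(n + 1)).

Local Notation N := (augA A0 E0 - L *m augC C0).
Local Notation M := (A0 - usubmx L *m C0).
Local Notation l := (last_coord L).

Definition exact_delayed_estimation : Prop :=
  forall (u f : nat -> R) (x0 : 'cV[R]_n) (Xh0 : 'cV[R]_(n + 1)) (k : nat),
    (n.+1 < k)%N -> fhat A0 B0 E0 C0 L u f x0 Xh0 k = f (k - n.+1)%N.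

Lemma err_mx_block : N = block_mx M E0 (- (l *: C0)) 1%:M.
Proof.
rewrite -{1}(vsubmxK L) /augA /augC mul_col_row !mulmx0 opp_block_mx add_block_mx.
rewrite !subr0 sub0r [dsubmx L]mx11_scalar mul_scalar_mx.
by congr (block_mx _ _ (- (_ *: _)) _); rewrite mxE.
Qed.

Section Trajectory.
Variables (u f : nat -> R) (x0 : 'cV[R]_n) (Xh0 : 'cV[R]_(n + 1)).

Definition est_err k : 'cV[R]_(n + 1) :=
  col_mx (xtraj A0 B0 E0 u f x0 k) (f k)%:M - obs_traj A0 B0 E0 C0 L u f x0 Xh0 k.

Lemma fhat_est_err k : fhat A0 B0 E0 C0 L u f x0 Xh0 k = f k - last_coord (est_err k).
Proof.
rewrite /last_coord /est_err /fhat mxE col_mxEd mxE eqxx mulr1n.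
by rewrite mxE opprD addrA subrr add0r opprK.
Qed.

Lemma est_errS k : est_err k.+1 = N *m est_err k + (f k.+1 - f k) *: unit_last.
Proof.
rewrite /est_err /=; set x := xtraj _ _ _ _ _ _ k.
set Xh := obs_traj _ _ _ _ _ _ _ _ _ k.
have augA_col : augA A0 E0 *m col_mx x (f k)%:M = col_mx (A0 *m x + f k *: E0) (f k)%:M.
  by rewrite /augA mul_block_col mul0mx add0r mul1mx mul_mx_scalar.
have augC_col : augC C0 *m col_mx x (f k)%:M = C0 *m x.
  by rewrite /augC mul_row_col mul0mx addr0.
have -> : col_mx (A0 *m x + u k *: B0 + f k *: E0) (f k.+1)%:M =
    augA A0 E0 *m col_mx x (f k)%:M + u k *: augB B0 + (f k.+1 - f k) *: unit_last.
  rewrite augA_col /augB /unit_last !scale_col_mx !add_col_mx !scaler0 !addr0.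
  by rewrite scale_scalar_mx mulr1 -raddfD /= addrAC [f k + _]addrC subrK.
rewrite -augC_col mulmxBl !mulmxBr -!mulmxA.
move: (augA A0 E0 *m _) (augA A0 E0 *m Xh) (L *m (augC C0 *m _)) (L *m (augC C0 *m Xh)).
by move=> a b c d; apply/matrixP => i j; rewrite !mxE; ring.
Qed.

Lemma fhat_closed k : fhat A0 B0 E0 C0 L u f x0 Xh0 k =
  f k - last_coord (N ^+ k *m est_err 0)
      - \sum_(j < k) (f j.+1 - f j) * last_coord (N ^+ (k - j.+1) *m unit_last).
Proof.
rewrite fhat_est_err (affine_recurrence est_errS) /last_coord mxE summxE opprD addrA.
by congr (_ - _ - _); apply: eq_bigr => j _; rewrite -scalemxAr mxE.
Qed.

End Trajectory.

Lemma exact_estimation_last_row : exact_delayed_estimation ->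
  forall k, (n.+1 < k)%N -> forall j, (N ^+ k) (rshift n ord0) j = 0.
Proof.
move=> exact k lt_nk j.
have := exact (fun=> 0) (fun=> 0) 0 (- delta_mx j 0) k lt_nk.
rewrite fhat_closed big1 => [|i _]; last by rewrite subrr mul0r.
rewrite /est_err /= raddf0 col_mx0 !sub0r opprK subr0 => /eqP.
by rewrite oppr_eq0 /last_coord -colE mxE => /eqP.
Qed.

Lemma exact_estimation_step_response : exact_delayed_estimation ->
  forall m, last_coord (N ^+ m *m unit_last) = (m <= n)%:R.
Proof.
move=> exact m; pose step j : R := (n.+1 < j)%:R.
have lt_nk : (n.+1 < m + n.+2)%N by lia.
have := exact (fun=> 0) step 0 0 _ lt_nk.
have dstep j : step j.+1 - step j = (j == n.+1)%:R.
  by rewrite /step -natrB; [congr _%:R|]; lia.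
rewrite fhat_closed /est_err /=; have -> : step 0%N = 0 by rewrite /step.
rewrite raddf0 col_mx0 subr0 mulmx0 {1}/last_coord mxE subr0.
under eq_bigr do rewrite dstep mulr_natl mulrb.
rewrite -big_mkcond.
rewrite (big_ord1_eq _ (fun j => last_coord (N ^+ (m + n.+2 - j.+1) *m unit_last))).
rewrite lt_nk addnK.
have -> : (m + n.+2 - n.+1 = m.+1)%N by lia.
rewrite /step lt_nk ltnS => /eqP; rewrite subr_eq addrC -subr_eq => /eqP <-.
by rewrite ltnNge; case: (m <= n)%N; rewrite /= ?subrr ?subr0.
Qed.

Lemma exact_estimation_of_step_response : N ^+ n.+1 = 0 ->
    (forall m, (m <= n)%N -> last_coord (N ^+ m *m unit_last) = 1) ->
  exact_delayed_estimation.
Proof.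
move=> Nnil step1 u f x0 Xh0 k lt_nk.
have Npow0 i : (n < i)%N -> N ^+ i = 0.
  by move=> lt_ni; rewrite -(subnKC lt_ni) exprD Nnil mul0r.
have step_resp i : last_coord (N ^+ i *m unit_last) = (i <= n)%:R.
  have [le_in|lt_ni] := leqP i n; first by rewrite step1.
  by rewrite Npow0 // mul0mx /last_coord mxE.
rewrite fhat_closed Npow0 1?ltnW // mul0mx {1}/last_coord mxE subr0.
under eq_bigr do rewrite step_resp mulr_natr mulrb.
rewrite -big_mkcond (eq_bigl (fun j : 'I_k => true && (k - n.+1 <= j)%N)) => [|j].
  rewrite -(big_geq_mkord _ _ xpredT (fun j => f j.+1 - f j)).
  by rewrite telescope_sumr ?leq_subr // opprB addrC subrK.
by have := ltn_ord j; lia.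
Qed.

Lemma exact_estimation_relative_degree : exact_delayed_estimation ->
  l != 0 /\ has_relative_degree M E0 C0 n.
Proof.
move=> /exact_estimation_step_response; rewrite err_mx_block => step_resp.
have lS0 m : (m <= n)%N ->
    forall i, (i < m)%N -> l * (C0 *m step_state M E0 i) 0 0 = 0.
  elim: m => [//|m IHm] lt_mn i; rewrite ltnS leq_eqVlt => /predU1P [->|lt_im].
    have := last_pow_unit_last (IHm (ltnW lt_mn)); rewrite step_resp lt_mn => /eqP.
    by rewrite /= mulr1n eq_sym -subr_eq0 addrAC subrr add0r oppr_eq0 => /eqP.
  exact: IHm (ltnW lt_mn) i lt_im.
have lSn : l * (C0 *m step_state M E0 n) 0 0 = 1.
  have := last_pow_unit_last (lS0 n (leqnn n)); rewrite step_resp ltnn /= mulr0n.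
  by move/eqP; rewrite eq_sym subr_eq0 => /eqP <-.
have l_neq0 : l != 0.
  by apply/eqP => l0; move: lSn; rewrite l0 mul0r => /eqP; rewrite eq_sym oner_eq0.
split=> //; apply: has_relative_degree_step => [i lt_in|].
  apply/matrixP => a b; rewrite !ord1 [RHS]mxE; apply/eqP.
  by rewrite -(mulrI_eq0 _ (lregP l_neq0)) (lS0 n).
apply/eqP => /matrixP /(_ 0 0); rewrite [X in _ = X]mxE => CS0.
by move: lSn; rewrite CS0 mulr0 => /eqP; rewrite eq_sym oner_eq0.
Qed.

Lemma step_response_of_markov :
    (forall j, (j.+2 <= n)%N -> C0 *m A0 ^+ j *m E0 = 0) ->
  forall m, (m <= n)%N -> last_coord (N ^+ m *m unit_last) = 1.
Proof.
move=> CAE0 m le_mn.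
have CME0 j : (j.+1 < n)%N -> C0 *m M ^+ j *m E0 = 0.
  move=> lt_jn; rewrite -mulmxA mulmx_exp_output_injection => [|i lt_ij].
    by rewrite mulmxA CAE0.
  by rewrite CAE0 //; lia.
rewrite err_mx_block pow_unit_last => [|i lt_im].
  by rewrite last_coord_col mxE eqxx mulr1n.
by rewrite (step_state_eq0 CME0) ?mxE ?mulr0 //; lia.
Qed.

Lemma cmx_err_mx : cmx N = block_mx (cmx M) (cmx E0) (- ((l%:C)%C *: cmx C0)) 1%:M.
Proof.
by rewrite err_mx_block /cmx map_block_mx map_mxN map_mxZ map_scalar_mx rmorph1.
Qed.

End ObserverError.

Unset Implicit Arguments.

Theorem theorem1 (R : realType) (n : nat) (hn : (1 <= n)%N)
  (A0 : 'M[R]_n) (B0 E0 : 'cV[R]_n) (C0 : 'rV[R]_n) (L : 'cV[R]_(n + 1)) :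
  (forall (u f : nat -> R) (x0 : 'cV[R]_n) (Xh0 : 'cV[R]_(n + 1)) (k : nat),
      (n.+1 < k)%N -> fhat A0 B0 E0 C0 L u f x0 Xh0 k = f (k - n.+1)%N)
  <->
  ((observable A0 C0 /\ no_invariant_zeros A0 E0 C0) /\
   (forall z : complex R,
      eigenvalue (cmx (augA A0 E0 - L *m augC C0)) z -> z = 0)).
Proof.
split=> [exact | [[_ no_zeros] eig0]].
- have [l_neq0 reldegM] := exact_estimation_relative_degree exact.
  have reldegA0 : has_relative_degree A0 E0 C0 n.
    have := has_relative_degree_output_injection (- usubmx L) reldegM.
    by rewrite mulNmx opprK subrK.
  split; first split.
  + exact/eqP/(relative_degree_obsv_free reldegA0).
  + move=> z; apply/mxrank_unit/relative_degree_rosenbrock_unit.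
    exact: has_relative_degree_map reldegA0.
  + move=> z /eigenvalue_col [v v_neq0]; rewrite cmx_err_mx.
    apply: (err_mx_eigenvalue_eq0 (k := n.+2) _ _ _ v_neq0).
    * exact: relative_degree_obsv_free (has_relative_degree_map _ reldegM).
    * by rewrite fmorph_eq0.
    * move=> j; rewrite -cmx_err_mx /cmx -rmorphXn mxE.
      by rewrite (exact_estimation_last_row exact) // rmorph0.
- apply: exact_estimation_of_step_response.
  + have := eigenvalues0_nilpotent eig0; rewrite /cmx -rmorphXn => /eqP.
    by rewrite map_mx_eq0 -(addn1 n) => /eqP.
  + apply: step_response_of_markov => j lt_jn.
    have R_unit z : rosenbrock A0 E0 C0 z \in unitmx.
      by rewrite -row_free_unit /row_free no_zeros.
    move: (rosenbrock_unit_markov_eq0 R_unit lt_jn) => /eqP.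
    by rewrite /cmx -rmorphXn -!map_mxM map_mx_eq0 => /eqP.
Qed.
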